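(* Let $k\geq1$, $n\geq2k$, let $\mathcal{S},\mathcal{T}$ be antichains in $\mathcal{F}=\mathcal{F}_{2k}^{[1,n]}$ with $\mathcal{T}\prec_p\mathcal{S}$, and let $i\geq1$. Then $$B(\mathcal{S},i)\setminus B(\mathcal{T},i)=\bigcup_{j\geq i}\Big(\big(B(\mathcal{S}([j,j+1]),j+2)\setminus B(\mathcal{T}([j,j+1]),j+2)\big)*\overline{[j,j+1]}\Big).$$
   Context: Notation: $[m,n]=\{m,\dots,n\}$; $d$-subsets of $[n]$ are identified with increasing vectors; $G\leq_p F$ means componentwise $\leq$ and $G\prec_p F$ means $G\leq_p F-\mathbf{1}_d$ ($\mathbf{1}_d$ the all-ones vector). For $r\geq1$, $\mathcal{F}_{2r}^{[m,n]}$ is the set of sets $\{i_1,i_1+1,\dots,i_r,i_r+1\}$ with $m\leq i_1$, $i_r\leq n-1$, $i_j\leq i_{j+1}-2$, ordered by $\leq_p$; $\mathcal{F}_0^{[m,n]}=\{\emptyset\}$. For antichains, $\mathcal{T}\prec_p\mathcal{S}$ means every $G\in\mathcal{T}$ satisfies $G\prec_p F$ for some $F\in\mathcal{S}$. $\mathcal{F}_{2r}(\mathcal{S})$ is the order ideal generated by $\mathcal{S}$. For $1\leq\ell\leq k$ and $J=[j,j+2\ell-1]$, $\mathcal{S}(J)\subseteq\mathcal{F}_{2(k-\ell)}^{[1,n]}$ is the set of maximal elements of $\{H\in\mathcal{F}_{2(k-\ell)}^{[1,n]}: H\subseteq[j+2\ell,n],\ J\cup H\in\mathcal{F}(\mathcal{S})\}$.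 $B(\mathcal{S},m)$ is the pure complex whose facets are the sets of $\mathcal{F}(\mathcal{S})\cap\mathcal{F}_{2k}^{[m,n]}$; $B(\mathcal{S}(J),m)$ is the pure complex whose facets are the sets of $\mathcal{F}_{2(k-\ell)}(\mathcal{S}(J))\cap\mathcal{F}_{2(k-\ell)}^{[m,n]}$. For pure complexes $X,Y$, $X\setminus Y$ is the complex generated by the facets of $X$ that are not facets of $Y$. $\overline{V}$ is the full simplex on $V$, $*$ is the join (join with the void complex is void). *)

From mathcomp Require Import all_boot.
From mathcomp Require Import finmap.
Set Implicit Arguments. Unset Strict Implicit. Unset Printing Implicit Defensive.
Local Open Scope fset_scope.

(* The void complex is the predicate that is everywhere false. *)
Definition face := {fset nat}.
Definition complex := face -> Prop.

Definition itv (a b : nat) : face := [fset x in iota a (b.+1 - a)].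

Definition vec (G : face) : seq nat := sort leq (G : seq nat).

(* G <=_p F : componentwise <= (same size) *)
Definition le_p (G F : face) : bool := all2 leq (vec G) (vec F).
(* G <_p F : G <=_p F - 1_d, i.e. g_t <= f_t - 1, i.e. g_t < f_t *)
Definition prec_p (G F : face) : bool := all2 (fun a b => a < b) (vec G) (vec F).

Definition Fam (r m n : nat) (H : face) : Prop :=
  exists ps : seq nat,
    [/\ size ps = r,
        sorted (fun a b => a.+2 <= b) ps,
        all (fun a => (m <= a) && (a.+1 <= n)) ps &
        H = \bigcup_(a <- ps) [fset a; a.+1]].

Definition antichain (k n : nat) (S : face -> Prop) : Prop :=
  (forall F, S F -> Fam k 1 n F) /\
  (forall F G, S F -> S G -> le_p F G -> F = G).

Definition precA (T S : face -> Prop) : Prop :=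
  forall G, T G -> exists F, S F /\ prec_p G F.

Definition Ideal (r n : nat) (S : face -> Prop) (G : face) : Prop :=
  Fam r 1 n G /\ exists F, S F /\ le_p G F.

(* S(J) for J = [j, j+2l-1]: maximal elements (w.r.t. <=_p) of
   { H in F_{2(k-l)}^{[1,n]} : H subset [j+2l, n], J cup H in F(S) } *)
Definition SJ (k n : nat) (S : face -> Prop) (l j : nat) (H : face) : Prop :=
  let P := fun H : face =>
    [/\ Fam (k - l) 1 n H, H `<=` itv (j + 2 * l) n
      & Ideal k n S (itv j (j + 2 * l - 1) `|` H)] in
  P H /\ forall H', P H' -> le_p H H' -> H' = H.

Definition gen (Fs : face -> Prop) : complex :=
  fun G => exists F, Fs F /\ G `<=` F.

Definition facets (X : complex) (F : face) : Prop :=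
  X F /\ forall G, X G -> F `<=` G -> G = F.

Definition cdiff (X Y : complex) : complex :=
  gen (fun F => facets X F /\ ~ facets Y F).

(* join of complexes (void if one of them is void) *)
Definition join (X Y : complex) : complex :=
  fun G => exists A B, [/\ X A, Y B & G = A `|` B].

Definition simplex (V : face) : complex := fun G => G `<=` V.

Definition Bc (r n : nat) (S : face -> Prop) (m : nat) : complex :=
  gen (fun F => Ideal r n S F /\ Fam r m n F).

From mathcomp Require Import all_boot.
From mathcomp Require Import finmap.
From mathcomp Require Import zify.
From Stdlib Require Import Classical.
Set Implicit Arguments. Unset Strict Implicit. Unset Printing Implicit Defensive.
Local Open Scope fset_scope.

(* A set of F_{2k}^{[m,n]} is a union of k "dominoes" {a, a+1}, separated by
   gaps; hence it splits uniquely as J ∪ H, where J = [j, j+1] is its first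
   domino (j >= m) and H lies in F_{2(k-1)}^{[j+2,n]}.  The heart of the proof
   is [link_ideal]: J ∪ H lies in the order ideal F(S) iff H lies in the ideal
   generated by S(J).  One direction needs maximal elements of
   {H' : J ∪ H' ∈ F(S)} above H; they exist because <=_p strictly raises the
   coordinate sum, which is bounded by n times the size ([exists_maximal_above]).
   The other direction holds because <=_p is compatible with prepending J.
   Since the facets of a complex generated by equicardinal faces are exactly
   its generators, J ∪ H is a facet of B(S,i) iff H is a facet of
   B(S(J), j+2) ([facets_Bc_cons]).  The corollary follows by splitting any
   face G under a facet J ∪ H as (G ∩ H) ∪ (G ∩ J). *)

Definition block (a : nat) : face := [fset a; a.+1].
Definition dominoes (ps : seq nat) : face := \bigcup_(a <- ps) block a.

Lemma in_itv x a b : (x \in itv a b) = (a <= x <= b).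
Proof.
rewrite /itv inE mem_iota; apply/idP/idP => /andP[h1 h2]; apply/andP; split; lia.
Qed.

Lemma itv_block j : itv j (j + 1) = block j.
Proof.
apply/fsetP => x; rewrite in_itv in_fset2.
by apply/idP/idP => [/andP[h1 h2]|/orP[]/eqP->] //; lia.
Qed.

Lemma dominoes_cons a ps : dominoes (a :: ps) = block a `|` dominoes ps.
Proof. by rewrite /dominoes big_cons. Qed.

Lemma in_dominoes x ps :
  (x \in dominoes ps) = has (fun a => (x == a) || (x == a.+1)) ps.
Proof.
elim: ps => [|a ps IH]; first by rewrite /dominoes big_nil inE.
by rewrite dominoes_cons in_fsetU in_fset2 IH.
Qed.

Lemma mem_vec X x : (x \in vec X) = (x \in X).
Proof. by rewrite /vec mem_sort. Qed.

Lemma vec_inj A B : vec A = vec B -> A = B.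
Proof. by move=> e; apply/fsetP => x; rewrite -!mem_vec e. Qed.

Lemma card_vec (A : face) : #|` A| = size (vec A).
Proof. by rewrite /vec size_sort. Qed.

Lemma vec_eq (X : face) s : sorted leq s -> uniq s -> X =i s -> vec X = s.
Proof.
rewrite /vec => ss us eqX; rewrite -(sorted_sort leq_trans ss).
apply/perm_sortP; [exact: leq_total|exact: leq_trans|exact: anti_leq|].
by apply: uniq_perm => //; exact: fset_uniq.
Qed.

Lemma vec_cat (A B : face) : (forall a b, a \in A -> b \in B -> a < b) ->
  vec (A `|` B) = vec A ++ vec B.
Proof.
move=> lt; apply: vec_eq.
- rewrite (sorted_pairwise leq_trans) pairwise_cat.
  rewrite -!(sorted_pairwise leq_trans) !(sort_sorted leq_total) /= andbT.
  apply/allrelP => a b; rewrite !mem_vec => ha hb; exact: ltnW (lt _ _ ha hb).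
- rewrite cat_uniq !sort_uniq !fset_uniq /= andbT.
  apply/hasPn => b; rewrite !mem_vec => hb; apply/negP => ha.
  by have := lt _ _ ha hb; rewrite ltnn.
- by move=> x; rewrite mem_cat !mem_vec in_fsetU.
Qed.

Lemma vec_block_cat a H : (forall x, x \in H -> a.+1 < x) ->
  vec (block a `|` H) = a :: a.+1 :: vec H.
Proof.
move=> gtH; rewrite vec_cat; last first.
  by move=> x y /[!in_fset2] /orP[]/eqP-> /gtH; lia.
suff -> : vec (block a) = [:: a; a.+1] by [].
apply: vec_eq; first by rewrite /= leqnSn.
  by rewrite /= inE andbT; apply/negP => /eqP; lia.
by move=> x; rewrite in_fset2 !inE.
Qed.

Definition gapped (a b : nat) : bool := a.+2 <= b.

Lemma gapped_trans : transitive gapped.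
Proof. move=> y x z; rewrite /gapped; lia. Qed.

Lemma size_vec_dominoes ps : sorted gapped ps -> size (vec (dominoes ps)) = 2 * size ps.
Proof.
elim: ps => [|a ps IH] /= sps; first by rewrite /dominoes big_nil /vec.
rewrite dominoes_cons vec_block_cat /= ?IH; [lia | exact: path_sorted sps|].
move=> x /[!in_dominoes] /hasP[b hb /orP[]/eqP->];
  have := allP (order_path_min gapped_trans sps) b hb; rewrite /gapped; lia.
Qed.

Lemma Fam_bounds r m n F x : Fam r m n F -> x \in F -> m <= x <= n.
Proof.
move=> [ps [_ _ /allP bps ->]]; rewrite -/(dominoes ps) in_dominoes.
by move=> /hasP[a /bps /andP[h1 h2] /orP[]/eqP->]; lia.
Qed.

Lemma Fam_card r m n F : Fam r m n F -> #|` F| = 2 * r.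
Proof. by move=> [ps [<- sps _ ->]]; rewrite card_vec size_vec_dominoes. Qed.

Lemma Fam_weaken r m m' n F : m' <= m -> Fam r m n F -> Fam r m' n F.
Proof.
move=> le [ps [s sps /allP bps eF]]; exists ps; split => //.
by apply/allP => a /bps /andP[h1 h2]; apply/andP; split; lia.
Qed.

Lemma Fam_cons r m n j H : m <= j -> j < n -> Fam r (j + 2) n H ->
  Fam r.+1 m n (block j `|` H).
Proof.
move=> mj jn [ps [s sps bps ->]]; exists (j :: ps); split.
- by rewrite /= s.
- rewrite /= path_min_sorted //.
  by apply/allP => a /(allP bps) /andP[h1 _]; rewrite /gapped; lia.
- rewrite /= mj jn /=.
  by apply/allP => a /(allP bps) /andP[h1 h2]; apply/andP; split; lia.
- by rewrite big_cons.
Qed.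

Lemma Fam_uncons r m n F : Fam r.+1 m n F ->
  exists j H, [/\ m <= j, F = block j `|` H & Fam r (j + 2) n H].
Proof.
move=> [[|j ps] [s sps bps ->]] //.
move: bps => /= /andP[/andP[mj _] bps].
exists j, (dominoes ps); split => //; first by rewrite big_cons.
exists ps; split => //; first by case: s.
- exact: path_sorted sps.
- apply/allP => a ha; have := allP (order_path_min gapped_trans sps) a ha.
  by have := allP bps a ha; rewrite /gapped => /andP[_ ->]; lia.
Qed.

Lemma le_p_refl A : le_p A A.
Proof. by rewrite /le_p; elim: (vec A) => //= x s ->; rewrite leqnn. Qed.

Lemma le_p_trans A B C : le_p A B -> le_p B C -> le_p A C.
Proof.
rewrite /le_p; elim: (vec A) (vec B) (vec C) => [|x s IH] [|y t] [|z u] //=.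
by move=> /andP[xy st] /andP[yz tu]; rewrite (leq_trans xy yz) (IH _ _ st tu).
Qed.

Lemma all2_leq_sumn s t : all2 leq s t -> sumn s <= sumn t ?= iff (s == t).
Proof.
elim: s t => [|x s IH] [|y t] //= /andP[xy /IH st].
rewrite eqseq_cons; exact: leqif_add (leqif_eq xy) st.
Qed.

Lemma le_p_sumn A B : le_p A B -> A <> B -> sumn (vec A) < sumn (vec B).
Proof.
move=> /all2_leq_sumn leAB neAB; rewrite (ltn_leqif leAB).
by apply/eqP => /vec_inj.
Qed.

Lemma le_p_size A B : le_p A B -> size (vec A) = size (vec B).
Proof. by rewrite /le_p all2E => /andP[/eqP]. Qed.

Lemma sumn_bound b s : (forall x, x \in s -> x <= b) -> sumn s <= b * size s.
Proof.
elim: s => [|x s IH] //= hb; rewrite mulnS leq_add ?hb ?mem_head //.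
by apply: IH => y hy; apply: hb; rewrite inE hy orbT.
Qed.

(* In a family of sets bounded by b, every member lies <=_p-below a maximal
   member: ascending chains are finite since the coordinate sum increases
   strictly and stays below b times the size. *)
Lemma exists_maximal_above (P : face -> Prop) b H :
  (forall H x, P H -> x \in H -> x <= b) -> P H ->
  exists H', [/\ P H', le_p H H' & forall H'', P H'' -> le_p H' H'' -> H'' = H'].
Proof.
move=> bnd; pose room X := b * size (vec X) - sumn (vec X).
suff: forall m X, room X < m -> P X ->
  exists H', [/\ P H', le_p X H' & forall H'', P H'' -> le_p H' H'' -> H'' = H'].
  by apply.
elim=> // m IH X roomX PX.
have [[Y [PY leXY neYX]] | noY] :=
  classic (exists Y, [/\ P Y, le_p X Y & Y <> X]); last first.
  exists X; split=> [//||Y PY leXY]; first exact: le_p_refl.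
  by apply: NNPP => neYX; apply: noY; exists Y.
have sumXY := le_p_sumn leXY (nesym neYX).
have boundY : sumn (vec Y) <= b * size (vec Y).
  by apply: sumn_bound => x; rewrite mem_vec; exact: bnd.
have [Z [PZ leYZ maxZ]] : exists Z,
    [/\ P Z, le_p Y Z & forall H'', P H'' -> le_p Z H'' -> H'' = Z].
  by apply: IH PY; move: roomX; rewrite /room (le_p_size leXY); lia.
by exists Z; split => //; exact: le_p_trans leXY leYZ.
Qed.

Lemma le_p_block a H H' :
  (forall x, x \in H -> a.+1 < x) -> (forall x, x \in H' -> a.+1 < x) ->
  le_p H H' -> le_p (block a `|` H) (block a `|` H').
Proof. by move=> gtH gtH'; rewrite /le_p !vec_block_cat //= !leqnn. Qed.

Lemma facets_gen (Fs : face -> Prop) c F :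
  (forall F, Fs F -> #|` F| = c) -> facets (gen Fs) F <-> Fs F.
Proof.
move=> card_c; split.
- move=> [[F' [FsF' FF']] maxF].
  by have <- : F' = F by apply: maxF => //; exists F'.
- move=> FsF; split; first by exists F.
  move=> G [F' [FsF' GF']] FG.
  have /eqP eF : F == F'.
    by rewrite eqEfcard (card_c _ FsF) (card_c _ FsF') leqnn (fsubset_trans FG GF').
  by subst F'; apply/eqP; rewrite eqEfsubset GF' FG.
Qed.

Lemma facets_Bc r n R m F : facets (Bc r n R m) F <-> Ideal r n R F /\ Fam r m n F.
Proof. by apply: (@facets_gen _ (2 * r)) => F' [_ /Fam_card]. Qed.

Definition link_fam r n (R : face -> Prop) j (H : face) : Prop :=
  [/\ Fam r 1 n H, H `<=` itv (j + 2) n & Ideal r.+1 n R (block j `|` H)].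

Lemma SJ_link r n R j H : SJ r.+1 n R 1 j H <->
  link_fam r n R j H /\ forall H', link_fam r n R j H' -> le_p H H' -> H' = H.
Proof.
have itvJ : itv j (j + 2 * 1 - 1) = block j by rewrite -itv_block; congr itv; lia.
by rewrite /SJ /link_fam itvJ subn1.
Qed.

Lemma link_ideal r n R j H : Fam r (j + 2) n H ->
  Ideal r.+1 n R (block j `|` H) <-> Ideal r n (SJ r.+1 n R 1 j) H.
Proof.
move=> FH; have FH1 : Fam r 1 n H by apply: Fam_weaken FH; lia.
have gtH x : x \in H -> j.+1 < x by move/(Fam_bounds FH); lia.
split=> [IdJH | [_ [H' [/SJ_link[[_ subH' [FJH' [F [RF leF]]]] _] leHH']]]].
- have linkH : link_fam r n R j H.
    by split=> //; apply/fsubsetP => x /(Fam_bounds FH); rewrite in_itv; lia.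
  have link_bounded X x : link_fam r n R j X -> x \in X -> x <= n.
    by case=> _ /fsubsetP sub _ /sub; rewrite in_itv => /andP[].
  have [H' [linkH' leHH' maxH']] := exists_maximal_above link_bounded linkH.
  by split=> //; exists H'; split=> //; apply/SJ_link.
- have gtH' x : x \in H' -> j.+1 < x.
    by move/(fsubsetP subH'); rewrite in_itv; lia.
  have /andP[j1 _] : 1 <= j <= n by apply: Fam_bounds FJH' _; rewrite in_fsetU fset21.
  have /andP[_ j1n] : 1 <= j.+1 <= n.
    by apply: Fam_bounds FJH' _; rewrite in_fsetU fset22.
  split; first exact: Fam_cons FH.
  by exists F; split=> //; apply: le_p_trans (le_p_block gtH gtH' leHH') leF.
Qed.

Lemma facets_Bc_cons r n R i j H : i <= j -> Fam r (j + 2) n H ->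
  facets (Bc r.+1 n R i) (block j `|` H) <->
  facets (Bc r n (SJ r.+1 n R 1 j) (j + 2)) H.
Proof.
move=> ij FH; rewrite !facets_Bc -link_ideal //.
split=> [[IdJH _] // | [IdJH _]]; split=> //.
have /andP[_ j1n] : 1 <= j.+1 <= n.
  by case: IdJH => FJH _; apply: Fam_bounds FJH _; rewrite in_fsetU fset22.
exact: Fam_cons FH.
Qed.

Theorem corollary3p7 (k n : nat) (S T : face -> Prop) (i : nat) :
  1 <= k -> 2 * k <= n ->
  antichain k n S -> antichain k n T -> precA T S -> 1 <= i ->
  forall G : face,
    cdiff (Bc k n S i) (Bc k n T i) G <->
    exists j, i <= j /\
      join (cdiff (Bc (k - 1) n (SJ k n S 1 j) (j + 2))
                  (Bc (k - 1) n (SJ k n T 1 j) (j + 2)))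
           (simplex (itv j (j + 1))) G.
Proof.
case: k => [//|r] _ _ _ _ _ _ G; rewrite subn1 /=.
split=> [[F [[facS notT] GF]] | [j [ij [A [B [[H [[facS notT] AH]] BJ ->]]]]]].
-
  have /facets_Bc[_ /Fam_uncons[j [H [ij eF FH]]]] := facS.
  rewrite eF in facS notT GF.
  rewrite (facets_Bc_cons S ij FH) in facS; rewrite (facets_Bc_cons T ij FH) in notT.
  exists j; split=> //; exists (G `&` H), (G `&` block j); split.
  + by exists H; split; last exact: fsubsetIr.
  + by rewrite /simplex itv_block fsubsetIr.
  + by rewrite -fsetIUr fsetUC; apply/esym/fsetIidPl.
-
  have /facets_Bc[_ FH] := facS.
  exists (block j `|` H); split.
  + by rewrite (facets_Bc_cons S ij FH) (facets_Bc_cons T ij FH).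
  + by rewrite fsetUC fsetUSS // -itv_block.
Qed.
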